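(* Let $X$ be a first countable, connected, locally path connected space, $n\in\mathbb{N}$, and let $A_1,\dots,A_n$ be pairwise disjoint, path connected, closed subsets of $X$. Let $p:X\to X/(A_1,\dots,A_n)$ be the associated quotient map. Then for every $a\in\bigcup_{i=1}^nA_i$, with $*=p(a)$, $\overline{p_*\pi_1^{top}(X,a)}=\pi_1^{top}(X/(A_1,\dots,A_n),* )$.
   Context: For subsets $A_1,\dots,A_n$ of a space $X$, $X/(A_1,\dots,A_n)$ denotes the quotient space obtained by collapsing each $A_i$ to a point, with quotient map $p$. $\pi_1^{top}(X,x)$ is $\pi_1(X,x)$ with the quotient topology from the loop space $\Omega(X,x)$ with the compact-open topology; $p_*$ is the induced continuous homomorphism. *)

From Stdlib Require Import Reals Lra List.
Open Scope R_scope.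

Record Top := {
  carrier :> Type;
  is_open : (carrier -> Prop) -> Prop;
  open_full : is_open (fun _ => True);
  open_inter : forall U V, is_open U -> is_open V -> is_open (fun x => U x /\ V x);
  open_union : forall (J : Type) (F : J -> carrier -> Prop),
      (forall j, is_open (F j)) -> is_open (fun x => exists j, F j x)
}.
Arguments is_open {t} _.

Definition is_closed {X : Top} (A : X -> Prop) : Prop :=
  is_open (fun x => ~ A x).

Definition continuous {X Y : Top} (f : X -> Y) : Prop :=
  forall V : Y -> Prop, is_open V -> is_open (fun x => V (f x)).

(** The unit interval [0,1] (as a subspace of R), maps out of it are
    represented by functions R -> X, only their values on [0,1] matter. *)
Definition inI (t : R) : Prop := 0 <= t <= 1.

Definition cont_on_I {X : Top} (f : R -> X) : Prop :=
  forall (U : X -> Prop), is_open U -> forall t, inI t -> U (f t) ->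
    exists eps, 0 < eps /\ forall s, inI s -> Rabs (s - t) < eps -> U (f s).

Definition cont_on_I2 {X : Top} (H : R -> R -> X) : Prop :=
  forall (U : X -> Prop), is_open U -> forall s t, inI s -> inI t -> U (H s t) ->
    exists eps, 0 < eps /\ forall s' t', inI s' -> inI t' ->
      Rabs (s' - s) < eps -> Rabs (t' - t) < eps -> U (H s' t').

Definition is_path {X : Top} (g : R -> X) (x y : X) : Prop :=
  cont_on_I g /\ g 0 = x /\ g 1 = y.

Definition is_loop {X : Top} (x : X) (g : R -> X) : Prop := is_path g x x.

Definition loop_homotopic {X : Top} (x : X) (f g : R -> X) : Prop :=
  exists H : R -> R -> X, cont_on_I2 H /\
    (forall t, inI t -> H 0 t = f t) /\ (forall t, inI t -> H 1 t = g t) /\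
    (forall s, inI s -> H s 0 = x /\ H s 1 = x).

Definition first_countable (X : Top) : Prop :=
  forall x : X, exists B : nat -> X -> Prop,
    (forall k, is_open (B k) /\ B k x) /\
    forall U, is_open U -> U x -> exists k, forall y, B k y -> U y.

Definition connected (X : Top) : Prop :=
  forall U : X -> Prop, is_open U -> is_closed U ->
    (forall x, U x) \/ (forall x, ~ U x).

Definition path_connected_set {X : Top} (A : X -> Prop) : Prop :=
  forall x y, A x -> A y -> exists g, is_path g x y /\ forall t, inI t -> A (g t).

Definition locally_path_connected (X : Top) : Prop :=
  forall (x : X) (U : X -> Prop), is_open U -> U x ->
    exists V, is_open V /\ V x /\ (forall y, V y -> U y) /\ path_connected_set V.

(** p : X -> Y is (up to homeomorphism of Y) the quotient map
    X -> X/(A_0,...,A_{n-1}) collapsing each A_i to a point. *)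
Definition is_collapse_quotient (X Y : Top) (n : nat) (A : nat -> X -> Prop)
    (p : X -> Y) : Prop :=
  (forall y : Y, exists x, p x = y) /\
  (forall x x', p x = p x' <-> x = x' \/ exists i, (i < n)%nat /\ A i x /\ A i x') /\
  (forall V : Y -> Prop, is_open V <-> is_open (fun x => V (p x))).

(** * The topological fundamental group pi_1^top(Y,y).
    Elements of pi_1(Y,y) are homotopy classes of loops; a set of classes is
    encoded as a homotopy-saturated set of loops. *)
Definition compact_in_I (K : R -> Prop) : Prop :=
  (forall t, K t -> inI t) /\
  forall (J : Type) (F : J -> R -> Prop),
    (forall j t, F j t -> exists eps, 0 < eps /\
         forall s, inI s -> Rabs (s - t) < eps -> F j s) ->
    (forall t, K t -> exists j, F j t) ->
    exists l : list J, forall t, K t -> exists j, In j l /\ F j t.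

Definition subbasic {Y : Top} (KU : (R -> Prop) * (Y -> Prop)) (f : R -> Y) : Prop :=
  forall t, fst KU t -> snd KU (f t).

Definition good_subbasic {Y : Top} (KU : (R -> Prop) * (Y -> Prop)) : Prop :=
  compact_in_I (fst KU) /\ is_open (snd KU).

(** Open sets of the loop space Omega(Y,y) (compact-open topology, i.e. the
    topology generated by the subbasic sets, restricted to loops at y). *)
Definition loopspace_open {Y : Top} (y : Y) (W : (R -> Y) -> Prop) : Prop :=
  (forall f, W f -> is_loop y f) /\
  forall f, W f -> exists l : list ((R -> Prop) * (Y -> Prop)),
    (forall KU, In KU l -> good_subbasic KU /\ subbasic KU f) /\
    (forall g, is_loop y g -> (forall KU, In KU l -> subbasic KU g) -> W g).

Definition saturated {Y : Top} (y : Y) (W : (R -> Y) -> Prop) : Prop :=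
  forall f g, W f -> is_loop y g -> loop_homotopic y f g -> W g.

(** Open subsets of pi_1^top(Y,y) (quotient topology from Omega(Y,y)). *)
Definition pi1_open {Y : Top} (y : Y) (W : (R -> Y) -> Prop) : Prop :=
  saturated y W /\ loopspace_open y W.

(** Closure in pi_1^top(Y,y) of a set S of classes (S saturated). *)
Definition pi1_closure {Y : Top} (y : Y) (S : (R -> Y) -> Prop) (g : R -> Y) : Prop :=
  is_loop y g /\
  forall W, pi1_open y W -> W g -> exists h, S h /\ W h.

Definition induced_image {X Y : Top} (p : X -> Y) (a : X) (g : R -> Y) : Prop :=
  is_loop (p a) g /\
  exists f : R -> X, is_loop a f /\ loop_homotopic (p a) (fun t => p (f t)) g.

(** A basic neighbourhood of [g] in the
    compact-open topology is given by finitely many constraints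
    [g(K) ⊆ U]; it suffices to find a loop [f] at [a] with [p ∘ f]
    satisfying the same constraints.

    It then proves a
    path-lifting property of [p] "up to an open set [V]": since fibres are
    path connected and [X] is locally path connected, the points reachable
    from [x0] inside [p⁻¹V] form a saturated clopen part of [p⁻¹V], so a path
    in [V] starting over [x0] never leaves its image.  Partial lifts
    satisfying the constraints are then extended by continuous induction
    along [[0,1]], and the theorem follows. *)
From Stdlib Require Import Reals Lra Lia List Classical FunctionalExtensionality PropExtensionality.
Open Scope R_scope.

Definition locally_on (a b : R) (S : R -> Prop) : Prop :=
  forall t, a <= t <= b -> S t ->
    exists eps, 0 < eps /\ forall s, a <= s <= b -> Rabs (s - t) < eps -> S s.

(** Proof: the supremum of the initial segments inside [S]
    can neither lie in [S] (it could be pushed further) nor outside it. *)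
Lemma interval_connected (a b : R) (S : R -> Prop) :
  a <= b -> S a -> locally_on a b S -> locally_on a b (fun t => ~ S t) ->
  forall t, a <= t <= b -> S t.
Proof.
  intros hab Sa hS hnS.
  set (E := fun x => a <= x <= b /\ forall y, a <= y <= x -> S y).
  assert (Ea : E a) by (split; [lra | intros y hy; replace y with a by lra; exact Sa]).
  destruct (completeness E) as [m [hub hlub]].
  { exists b; intros x [hx _]; lra. }
  { exists a; exact Ea. }
  assert (am : a <= m) by (apply hub, Ea).
  assert (mb : m <= b) by (apply hlub; intros x [hx _]; lra).
  assert (beyond : forall c, c < m -> exists x, E x /\ c < x).
  { intros c hc. apply NNPP; intros hn.
    assert (m <= c); [|lra].
    apply hlub; intros x hx. destruct (Rle_lt_dec x c); auto.
    exfalso; apply hn; eauto. }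
  assert (below : forall y, a <= y < m -> S y).
  { intros y hy. destruct (beyond y (proj2 hy)) as [x [[_ hx] hyx]]. apply hx; lra. }
  destruct (classic (S m)) as [Sm | nSm].
  - destruct (hS m (conj am mb) Sm) as [eps [heps Heps]].
    assert (near_m : forall y, a <= y <= b -> y < m + eps -> S y).
    { intros y hy hye. destruct (Rlt_le_dec y m); [apply below; lra|].
      apply Heps; [lra | split_Rabs; lra]. }
    intros y hy. destruct (Rlt_le_dec y (m + eps)) as [h | h]; [now apply near_m|].
    exfalso.
    set (z := Rmin (m + eps / 2) b).
    assert (hz : m < z <= b) by (unfold z; apply Rmin_case_strong; lra).
    assert (z <= m); [|lra].
    apply hub; split; [lra|]. intros w hw. apply near_m; [lra|].
    unfold z in hw; revert hw; apply Rmin_case_strong; lra.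
  - destruct (hnS m (conj am mb) nSm) as [eps [heps Heps]].
    destruct (beyond (m - eps)) as [x [[hx1 hx2] hxm]]; [lra|].
    assert (x <= m) by (apply hub; split; auto).
    exfalso; apply (Heps x); [lra | split_Rabs; lra | apply hx2; lra].
Qed.

Lemma nat_list_bound (l : list nat) : exists M, forall m, In m l -> (m <= M)%nat.
Proof.
  induction l as [|x l [M hM]]; [exists 0%nat; intros m []|].
  exists (Nat.max x M). intros m [<- | hm]; [apply Nat.le_max_l|].
  apply Nat.le_trans with M; [auto | apply Nat.le_max_r].
Qed.

(** A compact subset of [[0,1]] is closed in [R]: it is covered by the
    open sets [{s | 1/(m+1) < |s - t|}] whenever [t] lies outside it. *)
Lemma compact_closed (K : R -> Prop) (t : R) :
  compact_in_I K -> ~ K t -> exists eps, 0 < eps /\ forall s, Rabs (s - t) < eps -> ~ K s.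
Proof.
  intros [hKI hK] nKt.
  destruct (hK nat (fun m s => inI s /\ / INR (S m) < Rabs (s - t))) as [l hl].
  - intros m s [hs hst]. exists (Rabs (s - t) - / INR (S m)). split; [lra|].
    intros s' hs' h. split; auto. split_Rabs; lra.
  - intros s hs.
    assert (hpos : Rabs (s - t) > 0).
    { apply Rabs_pos_lt. intros h. apply nKt. replace t with s by lra. auto. }
    destruct (INR_archimed (Rabs (s - t)) 1 hpos) as [m hm].
    exists m. split; [apply hKI; auto|].
    assert (0 < INR (S m)) by (apply lt_0_INR; lia).
    rewrite S_INR in *.
    apply Rmult_lt_reg_l with (INR m + 1); [lra|]. rewrite Rinv_r; [nra | lra].
  - destruct (nat_list_bound l) as [M hM].
    assert (0 < INR (S M)) by (apply lt_0_INR; lia).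
    exists (/ INR (S M)). split; [apply Rinv_0_lt_compat; auto|].
    intros s hs Ks. destruct (hl s Ks) as [m [hm [_ hms]]].
    assert (INR (S m) <= INR (S M)) by (apply le_INR; specialize (hM m hm); lia).
    assert (0 < INR (S m)) by (apply lt_0_INR; lia).
    assert (/ INR (S M) <= / INR (S m)) by (apply Rinv_le_contravar; auto).
    lra.
Qed.

Definition meets_near {Y : Top} (l : list ((R -> Prop) * (Y -> Prop))) (g : R -> Y)
    (s s' : R) : Prop :=
  forall KU, In KU l -> fst KU s' -> snd KU (g s).

(** For [t ∈ K] this is
    continuity of [g]; for [t ∉ K] it is closedness of [K]. *)
Lemma subbasic_slack {Y : Top} (g : R -> Y) (l : list ((R -> Prop) * (Y -> Prop))) :
  cont_on_I g -> (forall KU, In KU l -> good_subbasic KU /\ subbasic KU g) ->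
  forall t, inI t -> exists d, 0 < d /\ forall s s', inI s -> inI s' ->
     Rabs (s - t) < d -> Rabs (s' - t) < d -> meets_near l g s s'.
Proof.
  intros hg. induction l as [|KU l IH]; intros hl t ht.
  { exists 1. split; [lra|]. intros s s' _ _ _ _ KU []. }
  destruct (IH ltac:(intros; apply hl; simpl; auto) t ht) as [d1 [hd1 H1]].
  destruct (hl KU (or_introl eq_refl)) as [[hK hU] hsub].
  assert (hhead : exists e, 0 < e /\ forall s s', inI s -> Rabs (s - t) < e ->
            Rabs (s' - t) < e -> fst KU s' -> snd KU (g s)).
  { destruct (classic (fst KU t)) as [Kt | nKt].
    - destruct (hg _ hU t ht (hsub t Kt)) as [e [he He]].
      exists e. split; auto.
    - destruct (compact_closed _ t hK nKt) as [e [he He]].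
      exists e. split; auto. intros s s' _ _ hs' Ks'. exfalso; exact (He s' hs' Ks'). }
  destruct hhead as [e [he He]].
  assert (hm1 := Rmin_l d1 e). assert (hm2 := Rmin_r d1 e).
  exists (Rmin d1 e). split; [apply Rmin_case; auto|].
  intros s s' hs hs' h1 h2 KU' [<- | hin] hK'.
  - apply (He s s'); auto; lra.
  - apply (H1 s s'); auto; lra.
Qed.

Definition cont_on {X : Top} (a b : R) (f : R -> X) : Prop :=
  forall U : X -> Prop, is_open U -> locally_on a b (fun t => U (f t)).

Lemma cont_on_ext {X : Top} a b (f g : R -> X) :
  (forall t, a <= t <= b -> f t = g t) -> cont_on a b f -> cont_on a b g.
Proof.
  intros he hf U hU t ht hUt. rewrite <- he in hUt by auto.
  destruct (hf U hU t ht hUt) as [e [he' He]]. exists e; split; auto.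
  intros s hs hst. rewrite <- he by auto. auto.
Qed.

Lemma cont_on_restr {X : Top} a b a' b' (f : R -> X) :
  a <= a' -> b' <= b -> cont_on a b f -> cont_on a' b' f.
Proof.
  intros h1 h2 hf U hU t ht hUt. destruct (hf U hU t ltac:(lra) hUt) as [e [he He]].
  exists e; split; auto. intros s hs hst; apply He; auto; lra.
Qed.

Lemma cont_on_comp {X Y : Top} a b (f : R -> X) (p : X -> Y) :
  continuous p -> cont_on a b f -> cont_on a b (fun t => p (f t)).
Proof. intros hp hf U hU. apply (hf (fun x => U (p x))), hp, hU. Qed.

Lemma cont_on_glue {X : Top} a c b (f : R -> X) :
  a <= c <= b -> cont_on a c f -> cont_on c b f -> cont_on a b f.
Proof.
  intros hc h1 h2 U hU t ht hUt.
  destruct (Rlt_le_dec t c) as [tc | tc]; [|destruct (Rlt_le_dec c t) as [ct | ct]].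
  - destruct (h1 U hU t ltac:(lra) hUt) as [e [he He]].
    assert (hm1 := Rmin_l e (c - t)). assert (hm2 := Rmin_r e (c - t)).
    exists (Rmin e (c - t)). split; [apply Rmin_case; lra|].
    intros s hs hst. apply He; [split_Rabs; lra | lra].
  - destruct (h2 U hU t ltac:(lra) hUt) as [e [he He]].
    assert (hm1 := Rmin_l e (t - c)). assert (hm2 := Rmin_r e (t - c)).
    exists (Rmin e (t - c)). split; [apply Rmin_case; lra|].
    intros s hs hst. apply He; [split_Rabs; lra | lra].
  - destruct (h1 U hU t ltac:(lra) hUt) as [e1 [he1 He1]].
    destruct (h2 U hU t ltac:(lra) hUt) as [e2 [he2 He2]].
    assert (hm1 := Rmin_l e1 e2). assert (hm2 := Rmin_r e1 e2).
    exists (Rmin e1 e2). split; [apply Rmin_case; lra|].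
    intros s hs hst. destruct (Rle_lt_dec s c); [apply He1 | apply He2]; lra.
Qed.

Definition piecewise {X : Type} (c : R) (f h : R -> X) (t : R) : X :=
  if Rle_dec t c then f t else h t.

Lemma cont_on_piecewise {X : Top} a c b (f h : R -> X) :
  a <= c <= b -> cont_on a c f -> cont_on c b h -> f c = h c ->
  cont_on a b (piecewise c f h).
Proof.
  intros hc hf hh hfh. unfold piecewise. apply cont_on_glue with c; [exact hc| |].
  - apply cont_on_ext with f; auto. intros t ht. destruct (Rle_dec t c); [auto | lra].
  - apply cont_on_ext with h; auto. intros t ht. destruct (Rle_dec t c); [|auto].
    replace t with c by lra. symmetry; exact hfh.
Qed.

Lemma affine_in_I a b t : a < b -> a <= t <= b -> inI ((t - a) / (b - a)).
Proof.
  intros hab ht. unfold inI. split.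
  - unfold Rdiv; apply Rmult_le_pos; [lra | left; apply Rinv_0_lt_compat; lra].
  - apply Rmult_le_reg_r with (b - a); [lra|].
    unfold Rdiv; rewrite Rmult_assoc, Rinv_l; lra.
Qed.

Lemma cont_on_affine {X : Top} a b (f : R -> X) :
  a < b -> cont_on 0 1 f -> cont_on a b (fun t => f ((t - a) / (b - a))).
Proof.
  intros hab hf U hU t ht hUt.
  destruct (hf U hU _ (affine_in_I a b t hab ht) hUt) as [e [he He]].
  exists (e * (b - a)). split; [nra|]. intros s hs hst.
  apply He; [exact (affine_in_I a b s hab hs)|].
  replace ((s - a) / (b - a) - (t - a) / (b - a)) with ((s - t) / (b - a)) by (field; lra).
  unfold Rdiv. rewrite Rabs_mult, Rabs_inv, (Rabs_right (b - a)) by lra.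
  apply Rmult_lt_reg_r with (b - a); [lra|]. rewrite Rmult_assoc, Rinv_l; lra.
Qed.

Lemma open_equiv {X : Top} (S T : X -> Prop) :
  (forall x, S x <-> T x) -> is_open S -> is_open T.
Proof.
  intros h hS. replace T with S; [exact hS|].
  apply functional_extensionality; intros x; apply propositional_extensionality, h.
Qed.

Lemma open_local {X : Top} (S : X -> Prop) :
  (forall x, S x -> exists N, is_open N /\ N x /\ forall y, N y -> S y) -> is_open S.
Proof.
  intros h.
  apply (open_equiv (fun x => exists j : {N : X -> Prop | is_open N /\ forall y, N y -> S y},
                       proj1_sig j x)).
  - intros x; split.
    + intros [[N [hNo hN]] hx]; exact (hN x hx).
    + intros hx. destruct (h x hx) as [N [hN [hNx hNS]]].
      exists (exist _ N (conj hN hNS)); simpl; auto.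
  - apply open_union. intros [N [hN hNS]]; exact hN.
Qed.

Lemma open_constraints {Y : Top} (P : (R -> Prop) -> Prop)
    (l : list ((R -> Prop) * (Y -> Prop))) :
  (forall KU, In KU l -> is_open (snd KU)) ->
  is_open (fun y => forall KU, In KU l -> P (fst KU) -> snd KU y).
Proof.
  induction l as [|KU l IH]; intros hl.
  - apply (open_equiv (fun _ => True)); [|apply open_full].
    intros y; split; [intros _ KU [] | auto].
  - assert (hhead : is_open (fun y => P (fst KU) -> snd KU y)).
    { destruct (classic (P (fst KU))) as [h | h].
      - apply (open_equiv (snd KU)); [intros y; tauto | apply hl; simpl; auto].
      - apply (open_equiv (fun _ => True)); [intros y; tauto | apply open_full]. }
    assert (htail := IH ltac:(intros; apply hl; simpl; auto)).
    refine (open_equiv _ _ _ (open_inter _ _ _ hhead htail)).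
    intros y; split.
    + intros [H1 H2] KU' [<- | hin]; auto.
    + intros H; split; intros; apply H; simpl; auto.
Qed.

Lemma const_path {X : Top} (x : X) : is_path (fun _ => x) x x.
Proof. split; [|auto]. intros U hU t ht hUt. exists 1; split; [lra | auto]. Qed.

Definition pconcat {X : Top} (f g : R -> X) : R -> X :=
  piecewise (1/2) (fun t => f (2 * t)) (fun t => g (2 * t - 1)).

Lemma concat_path {X : Top} (f g : R -> X) x y z (P : X -> Prop) :
  is_path f x y -> is_path g y z -> (forall t, inI t -> P (f t)) -> (forall t, inI t -> P (g t)) ->
  is_path (pconcat f g) x z /\ forall t, inI t -> P (pconcat f g t).
Proof.
  intros [cf [f0 f1]] [cg [g0 g1]] hPf hPg. unfold pconcat, piecewise. repeat split.
  - apply (cont_on_piecewise 0 (1/2) 1); [lra | | |].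
    + apply cont_on_ext with (fun t => f ((t - 0) / (1/2 - 0))); [intros; f_equal; field|].
      apply cont_on_affine; [lra | exact cf].
    + apply cont_on_ext with (fun t => g ((t - 1/2) / (1 - 1/2))); [intros; f_equal; field|].
      apply cont_on_affine; [lra | exact cg].
    + replace (2 * (1/2)) with 1 by field. replace (1 - 1) with 0 by ring. congruence.
  - destruct (Rle_dec 0 (1/2)); [|lra]. rewrite Rmult_0_r; auto.
  - destruct (Rle_dec 1 (1/2)); [lra|]. replace (2 * 1 - 1) with 1 by ring; auto.
  - intros t ht. unfold inI in ht. destruct (Rle_dec t (1/2)).
    + apply hPf. unfold inI; lra.
    + apply hPg. unfold inI; lra.
Qed.

Lemma loop_image {X Y : Top} (p : X -> Y) (a : X) (f : R -> X) :
  continuous p -> is_loop a f -> is_loop (p a) (fun t => p (f t)).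
Proof.
  intros hp [cf [f0 f1]].
  split; [exact (cont_on_comp 0 1 f p hp cf) | split; congruence].
Qed.

Lemma homotopic_refl {Y : Top} (y : Y) (h : R -> Y) : is_loop y h -> loop_homotopic y h h.
Proof.
  intros [ch [h0 h1]]. exists (fun s t => h t). repeat split; auto.
  intros U hU s t hs ht hUt. destruct (ch U hU t ht hUt) as [e [he He]].
  exists e; split; auto.
Qed.

Section Quotient.
Variables (X Y : Top) (n : nat) (A : nat -> X -> Prop) (p : X -> Y).
Hypothesis hlpc : locally_path_connected X.
Hypothesis hpc : forall i, (i < n)%nat -> path_connected_set (A i).
Hypothesis hp : is_collapse_quotient X Y n A p.

Lemma p_continuous : continuous p.
Proof. destruct hp as [_ [_ h]]. intros V hV. apply h, hV. Qed.

(** Fibres of [p] are path connected: they are points or some [A i]. *)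
Lemma fibre_path z w : p z = p w -> exists g, is_path g z w /\ forall t, inI t -> p (g t) = p z.
Proof.
  intros e. destruct hp as [_ [heq _]].
  destruct (proj1 (heq z w) e) as [<- | [i [hi [Az Aw]]]].
  - exists (fun _ => z). split; [apply const_path | auto].
  - destruct (hpc i hi z w Az Aw) as [g [hg hgA]]. exists g. split; auto.
    intros t ht. apply heq. right. exists i. auto.
Qed.

Section Reach.
Variables (V : Y -> Prop) (x0 : X).
Hypothesis hV : is_open V.

Definition reachable (z : X) : Prop :=
  exists gam, is_path gam x0 z /\ forall t, inI t -> V (p (gam t)).

Lemma reachable_extend z w d :
  reachable z -> is_path d z w -> (forall t, inI t -> V (p (d t))) -> reachable w.
Proof.
  intros [gam [hgam hgV]] hd hdV.
  destruct (concat_path gam d x0 z w (fun x => V (p x)) hgam hd hgV hdV) as [h1 h2].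
  exists (pconcat gam d); auto.
Qed.

(** Reachability is constant on fibres of [p], since fibres are path connected. *)
Lemma reachable_saturated z w : reachable z -> p z = p w -> reachable w.
Proof.
  intros hz e. destruct (fibre_path z w e) as [d [hd hdp]].
  apply (reachable_extend z w d hz hd). intros t ht. rewrite hdp by exact ht.
  destruct hz as [gam [[_ [_ g1]] hgV]]. rewrite <- g1. apply hgV. unfold inI; lra.
Qed.

(** Reachability is locally constant on [p⁻¹V], by local path connectedness. *)
Lemma reachable_locally_constant x : V (p x) ->
  exists N, is_open N /\ N x /\ (forall y, N y -> V (p y)) /\
    forall y, N y -> (reachable x <-> reachable y).
Proof.
  intros hx.
  destruct (hlpc x _ (p_continuous V hV) hx) as [N [hN [hNx [hNV hNpc]]]].
  exists N. split; [exact hN|]. split; [exact hNx|]. split; [exact hNV|].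
  intros y hy; split; intros hreach.
  - destruct (hNpc x y hNx hy) as [d [hd hdN]].
    apply (reachable_extend x y d hreach hd). intros t ht; apply hNV; auto.
  - destruct (hNpc y x hy hNx) as [d [hd hdN]].
    apply (reachable_extend y x d hreach hd). intros t ht; apply hNV; auto.
Qed.

Definition reached (y : Y) : Prop := V y /\ exists z, p z = y /\ reachable z.

Lemma reached_image x : reached (p x) <-> V (p x) /\ reachable x.
Proof.
  split.
  - intros [hx [z [e hz]]]. split; [exact hx | exact (reachable_saturated z x hz e)].
  - intros [hx hreach]. split; [exact hx | exists x; auto].
Qed.

(** Both the reached part of [V] and its complement in [V] are open, as
    their preimages are open in the quotient topology. *)
Lemma reached_open : is_open reached.
Proof.
  destruct hp as [_ [_ htop]]. apply htop, open_local. intros x hx.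
  apply reached_image in hx. destruct hx as [hx hreach].
  destruct (reachable_locally_constant x hx) as [N [hN [hNx [hNV hNr]]]].
  exists N. split; [exact hN|]. split; [exact hNx|]. intros y hy.
  apply reached_image. split; [apply hNV, hy | apply (hNr y hy), hreach].
Qed.

Lemma unreached_open : is_open (fun y => V y /\ ~ reached y).
Proof.
  destruct hp as [_ [_ htop]]. apply htop, open_local. intros x [hx hnr].
  destruct (reachable_locally_constant x hx) as [N [hN [hNx [hNV hNr]]]].
  exists N. split; [exact hN|]. split; [exact hNx|]. intros y hy. split; [apply hNV, hy|].
  intros hry. apply hnr, reached_image. apply reached_image in hry.
  split; [exact hx | apply (hNr y hy), hry].
Qed.

End Reach.

(** Indeed, by connectedness of [[a,b]], [g] never leaves
    the reached part of [V]. *)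
Lemma lift_path (V : Y -> Prop) a b (g : R -> Y) x0 x1 :
  is_open V -> a <= b -> cont_on a b g -> (forall s, a <= s <= b -> V (g s)) ->
  p x0 = g a -> p x1 = g b ->
  exists gam, is_path gam x0 x1 /\ forall t, inI t -> V (p (gam t)).
Proof.
  intros hV hab hg hgV e0 e1.
  assert (hreached : reached V x0 (g b)).
  { apply (interval_connected a b (fun s => reached V x0 (g s)) hab); [| | |lra].
    - rewrite <- e0. apply reached_image. split; [rewrite e0; apply hgV; lra|].
      exists (fun _ => x0). split; [apply const_path|]. intros; rewrite e0; apply hgV; lra.
    - exact (hg _ (reached_open V x0 hV)).
    - intros t ht hnr.
      destruct (hg _ (unreached_open V x0 hV) t ht (conj (hgV t ht) hnr)) as [e [he He]].
      exists e; split; auto. intros s hs hst. apply He; auto. }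
  rewrite <- e1 in hreached. apply reached_image in hreached. exact (proj2 hreached).
Qed.

Section Approximation.
Variables (a : X) (g : R -> Y) (l : list ((R -> Prop) * (Y -> Prop))).
Hypothesis hg : cont_on 0 1 g.
Hypothesis hl : forall KU, In KU l -> good_subbasic KU /\ subbasic KU g.

Definition lift_upto (u : R) (f : R -> X) : Prop :=
  cont_on 0 u f /\ f 0 = a /\
  forall s, 0 <= s <= u -> forall KU, In KU l -> fst KU s -> snd KU (p (f s)).

(** Extension step: if on [[t,s]] the constraints hold with slack, a partial
    lift ending over [g t] extends to one ending at any point over [g s],
    by lifting [g|[t,s]] up to the open set of all constraints relevant there. *)
Lemma lift_upto_extend t s f x1 :
  0 <= t < s -> s <= 1 ->
  (forall r r', t <= r <= s -> t <= r' <= s -> meets_near l g r r') ->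
  lift_upto t f -> p (f t) = g t -> p x1 = g s ->
  exists f', lift_upto s f' /\ f' s = x1.
Proof.
  intros hts hs1 hnear [cf [f0 hfits]] eft e1.
  set (V := fun y => forall KU, In KU l -> (exists r', t <= r' <= s /\ fst KU r') -> snd KU y).
  assert (hV : is_open V).
  { apply (open_constraints (fun K => exists r', t <= r' <= s /\ K r')).
    intros KU hin; apply (hl KU hin). }
  destruct (lift_path V t s g (f t) x1 hV) as [gam [[cgam [gam0 gam1]] hgamV]];
    [lra | apply (cont_on_restr 0 1); [lra | lra | exact hg] | | exact eft | exact e1|].
  { intros r hr KU hin [r' [hr' hK]]. exact (hnear r r' hr hr' KU hin hK). }
  set (h := fun r => gam ((r - t) / (s - t))).
  exists (piecewise t f h). unfold piecewise. split; [split; [|split]|].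
  - apply (cont_on_piecewise 0 t s); [lra | exact cf | apply cont_on_affine; [lra | exact cgam]|].
    unfold h. replace ((t - t) / (s - t)) with 0 by (field; lra). congruence.
  - destruct (Rle_dec 0 t); [exact f0 | lra].
  - intros r hr KU hin hK. destruct (Rle_dec r t); [apply hfits; auto; lra|].
    apply (hgamV _ (affine_in_I t s r ltac:(lra) ltac:(lra)) KU hin).
    exists r; split; [lra | exact hK].
  - destruct (Rle_dec s t); [lra|]. unfold h.
    replace ((s - t) / (s - t)) with 1 by (field; lra). exact gam1.
Qed.

Lemma lift_extend_near t : inI t -> exists d, 0 < d /\
  forall r r' f x1, inI r -> inI r' -> Rabs (r - t) < d -> Rabs (r' - t) < d -> r < r' ->
    lift_upto r f -> p (f r) = g r -> p x1 = g r' -> exists f', lift_upto r' f' /\ f' r' = x1.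
Proof.
  intros ht. destruct (subbasic_slack g l hg hl t ht) as [d [hd hnear]].
  exists d. split; [exact hd|]. intros r r' f x1 hr hr' hrt hr't hrr'.
  unfold inI in *. apply lift_upto_extend; [lra | lra|].
  intros u u' hu hu'. apply hnear; [unfold inI; lra | unfold inI; lra | split_Rabs; lra | split_Rabs; lra].
Qed.

Definition liftable (u : R) : Prop :=
  forall s, 0 <= s <= u -> exists f, lift_upto s f /\ p (f s) = g s.

(** Continuous induction: liftability propagates across every neighbourhood
    given by [lift_extend_near], hence holds on all of [[0,1]]. *)
Lemma liftable_everywhere : g 0 = p a -> liftable 1.
Proof.
  intros hg0.
  assert (propagate : forall t, inI t -> exists d, 0 < d /\ forall u v, liftable u -> inI u ->
            inI v -> Rabs (u - t) < d -> Rabs (v - t) < d -> liftable v).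
  { intros t ht. destruct (lift_extend_near t ht) as [d [hd hext]]. exists d; split; [exact hd|].
    intros u v hu hui hvi hut hvt r hr. unfold inI in *.
    destruct (Rle_lt_dec r u) as [hru | hur]; [apply hu; lra|].
    destruct (hu u) as [f [hf ef]]; [lra|].
    destruct hp as [hsurj _]. destruct (hsurj (g r)) as [x1 e1].
    destruct (hext u r f x1) as [f' [hf' ef']]; unfold inI; try lra; auto; [split_Rabs; lra|].
    exists f'. split; [exact hf' | rewrite ef'; exact e1]. }
  apply (interval_connected 0 1 liftable); [lra | | | | lra].
  - intros s hs. replace s with 0 by lra. exists (fun _ => a).
    split; [split; [|split]|]; [apply (cont_on_restr 0 1); [lra | lra | apply const_path] | auto | |auto].
    intros r hr KU hin hK. replace r with 0 in hK by lra. rewrite <- hg0. apply (hl KU hin), hK.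
  - intros t ht hlt. destruct (propagate t ht) as [d [hd hprop]]. exists d; split; [exact hd|].
    intros s hs hst. apply (hprop t s hlt ht hs); [rewrite Rminus_diag, Rabs_R0; exact hd | exact hst].
  - intros t ht hnt. destruct (propagate t ht) as [d [hd hprop]]. exists d; split; [exact hd|].
    intros s hs hst hls. apply hnt, (hprop s t hls hs ht hst). rewrite Rminus_diag, Rabs_R0; exact hd.
Qed.

(** The approximation: a loop at [a] whose image meets all constraints of [l].
    The last piece of the lift is re-chosen to end exactly at [a]. *)
Lemma approx_loop : g 0 = p a -> g 1 = p a ->
  exists f, is_loop a f /\ forall KU, In KU l -> subbasic KU (fun t => p (f t)).
Proof.
  intros hg0 hg1.
  destruct (lift_extend_near 1 ltac:(unfold inI; lra)) as [d [hd hext]].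
  set (s := Rmax 0 (1 - d / 2)).
  assert (hs : 0 <= s < 1 /\ Rabs (s - 1) < d) by (unfold s; apply Rmax_case_strong; intros; split_Rabs; lra).
  destruct (liftable_everywhere hg0 s) as [f [hf ef]]; [lra|].
  destruct (hext s 1 f a) as [f' [[cf' [f0 hfits]] f1]]; unfold inI; try lra; auto.
  { rewrite Rminus_diag, Rabs_R0; exact hd. }
  exists f'. split; [split; [exact cf' | split; auto]|].
  intros KU hin t hK. destruct (hl KU hin) as [[[hKI _] _] _].
  apply hfits; [apply hKI, hK | exact hin | exact hK].
Qed.

End Approximation.
End Quotient.


Theorem corollary3p12 (X Y : Top) (n : nat) (A : nat -> X -> Prop) (p : X -> Y)
  (hfc : first_countable X) (hconn : connected X) (hlpc : locally_path_connected X)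
  (hdisj : forall i j x, (i < n)%nat -> (j < n)%nat -> i <> j -> A i x -> A j x -> False)
  (hpc : forall i, (i < n)%nat -> path_connected_set (A i))
  (hcl : forall i, (i < n)%nat -> is_closed (A i))
  (hp : is_collapse_quotient X Y n A p) :
  forall a : X, (exists i, (i < n)%nat /\ A i a) ->
    forall g : R -> Y, pi1_closure (p a) (induced_image p a) g <-> is_loop (p a) g.
Proof.
  intros a _ g. split; [intros [hg _]; exact hg|].
  intros hg. split; [exact hg|].
  intros W [_ [_ hW]] Wg.
  destruct (hW g Wg) as [l [hl hWl]].
  pose proof hg as [cg [g0 g1]].
  destruct (approx_loop X Y n A p hlpc hpc hp a g l cg hl g0 g1) as [f [hf hfl]].
  assert (hpf : is_loop (p a) (fun t => p (f t))) by exact (loop_image p a f (p_continuous X Y n A p hp) hf).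
  exists (fun t => p (f t)). split.
  - split; [exact hpf|]. exists f. split; [exact hf | exact (homotopic_refl _ _ hpf)].
  - exact (hWl _ hpf hfl).
Qed.
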